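(* Let $m,p$ be positive integers and let $\gamma=(\gamma_{ik})\in\{0,1\}^{m\times p}$ satisfy $\sum_{k=1}^p\gamma_{ik}=1$ for every $i=1,\dots,m$. For each $i$ let $\pi(i)$ be the unique $k$ with $\gamma_{ik}=1$. Then $\gamma$ satisfies \[\sum_{j=1}^{i-1}\gamma_{jk}\;\ge\;\sum_{l=k+1}^{p}\gamma_{il}\qquad\text{for all } i\in\{1,\dots,m\},\ k\in\{1,\dots,p\}\text{ with } k\le i\] (an empty sum being $0$) if and only if $\pi(1)=1$ and $\pi(i)\le 1+\max_{j<i}\pi(j)$ for every $i=2,\dots,m$. Consequently, for every partition of $\{1,\dots,m\}$ into at most $p$ nonempty blocks there is exactly one such $\gamma$ satisfying these inequalities whose nonempty level sets $\{i:\pi(i)=k\}$ are exactly the blocks of the partition, and for this $\gamma$ the indices $k$ of the nonempty level sets are exactly $1,\dots,r$, where $r$ is the number of blocks. *)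

(* Indices are 0-based: row i : 'I_m stands for i+1,
   column k : 'I_p stands for k+1. *)
From mathcomp Require Import all_boot all_order all_algebra.
Set Implicit Arguments. Unset Strict Implicit. Unset Printing Implicit Defensive.

Definition assignment (m p : nat) (g : 'M[nat]_(m, p)) : Prop :=
  (forall i k, g i k <= 1) /\ (forall i, \sum_(k < p) g i k = 1).

Definition ordered_ineq (m p : nat) (g : 'M[nat]_(m, p)) : Prop :=
  forall (i : 'I_m) (k : 'I_p), k <= i ->
    \sum_(l < p | k < l) g i l <= \sum_(j < m | j < i) g j k.

Definition level (m p : nat) (g : 'M[nat]_(m, p)) (k : 'I_p) : {set 'I_m} :=
  [set i | g i k == 1].

Definition nonempty_levels (m p : nat) (g : 'M[nat]_(m, p)) : {set {set 'I_m}} :=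
  [set level g k | k in [set k : 'I_p | level g k != set0]].

From mathcomp Require Import all_boot all_order all_algebra.
Set Implicit Arguments. Unset Strict Implicit. Unset Printing Implicit Defensive.

(* An assignment g is the indicator matrix of its labelling pi (row i has its
   single 1 in column pi i).  For such a matrix the left side of the ordered
   inequality at (i, k) is [k < pi i] and the right side counts the earlier
   rows labelled k; so the inequalities say that every label k < pi i (with
   k <= i) already occurs before row i.  This first forces pi i <= i, hence the
   restriction k <= i can be dropped: pi is a restricted growth function, which
   is the same as pi 0 = 0 and pi i <= 1 + max_{j<i} pi j.  A restricted growth
   function is determined by its kernel (which rows share a label), by
   induction on the row.
   Conversely, a partition P of the rows yields the restricted growth
   labelling "rank of the block of i", where the rank of a block B is the number
   of blocks whose least element is smaller than that of B; the ranks are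
   injective and fill the range 0 .. #|P|-1.  Its indicator matrix is the
   unique ordered assignment with level sets P, and its nonempty levels are
   exactly the columns below #|P|. *)

Lemma sum_indicator (I : finType) (P : pred I) (a : I) :
  \sum_(l | P l) ((l == a) : nat) = P a.
Proof.
case Pa: (P a); last by rewrite big1 // => l Pl; case: eqP => // la; rewrite -la Pl in Pa.
by rewrite (bigD1 a) //= eqxx big1 // => l /andP[_ /negbTE ->].
Qed.

Definition indicator_matrix m p (pi : 'I_m -> 'I_p) : 'M[nat]_(m, p) :=
  \matrix_(i, k) ((k == pi i) : nat).

Lemma indicator_assignment m p (pi : 'I_m -> 'I_p) : assignment (indicator_matrix pi).
Proof.
split=> [i k|i]; rewrite ?mxE; first by case: (_ == _).
by rewrite (eq_bigr (fun k => ((k == pi i) : nat))) ?sum_indicator // => k _; rewrite mxE.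
Qed.

Lemma assignment_label m p (g : 'M[nat]_(m, p)) :
  assignment g -> exists pi : 'I_m -> 'I_p, forall i, g i (pi i) = 1.
Proof.
move=> [g_le1 g_sum]; apply: (@fin_all_exists _ (fun=> _) (fun i k => g i k = 1)) => i.
case: (pickP (fun k => g i k == 1)) => [k /eqP gik|no1]; first by exists k.
have := g_sum i; rewrite big1 // => k _.
by have := g_le1 i k; have := no1 k; case: (g i k) => [|[|]].
Qed.

Lemma assignmentE m p (g : 'M[nat]_(m, p)) (pi : 'I_m -> 'I_p) :
  assignment g -> (forall i, g i (pi i) = 1) -> g = indicator_matrix pi.
Proof.
move=> [_ g_sum] g_pi; apply/matrixP => i l; rewrite mxE.
case: eqP => [->|l_ne]; first exact: g_pi.
have := g_sum i; rewrite (bigD1 (pi i)) //= g_pi => /eqP.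
rewrite -{2}[1]addn0 eqn_add2l sum_nat_eq0 => /forall_inP /(_ l).
by move=> /(_ (introN eqP l_ne)) /eqP.
Qed.

Lemma level_indicator m p (pi : 'I_m -> 'I_p) (k : 'I_p) :
  level (indicator_matrix pi) k = [set i | pi i == k].
Proof. by apply/setP => i; rewrite !inE mxE [pi i == k]eq_sym; case: (k == pi i). Qed.

Section RestrictedGrowth.
Variables m p : nat.
Implicit Type pi : 'I_m -> 'I_p.

Definition restricted_growth pi :=
  forall (i : 'I_m) (k : 'I_p), k < pi i -> exists2 j : 'I_m, j < i & pi j = k.

(* The same, but only for labels k <= i; this is what the inequalities say. *)
Definition bounded_restricted_growth pi :=
  forall (i : 'I_m) (k : 'I_p), k <= i -> k < pi i -> exists2 j : 'I_m, j < i & pi j = k.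

Lemma ordered_ineq_indicator pi :
  ordered_ineq (indicator_matrix pi) <-> bounded_restricted_growth pi.
Proof.
have tail i k : \sum_(l < p | k < l) indicator_matrix pi i l = (k < pi i).
  by rewrite (eq_bigr (fun l => ((l == pi i) : nat))) ?sum_indicator // => l _; rewrite mxE.
have earlier i k : \sum_(j < m | j < i) indicator_matrix pi j k =
                   \sum_(j < m | j < i) ((k == pi j) : nat).
  by apply: eq_bigr => j _; rewrite mxE.
split=> [ineq i k ki k_lt|brg i k ki]; rewrite ?tail ?earlier.
  have := ineq i k ki; rewrite tail earlier k_lt.
  case: (boolP [exists j : 'I_m, (j < i) && (k == pi j)]).
    by case/existsP => j /andP[ji /eqP ->]; exists j.
  rewrite negb_exists => /forallP none.
  rewrite big1 // => j ji; have := none j; rewrite ji /=; by case: eqP.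
case k_lt: (k < pi i) => //; have [j ji <-] := brg i k ki k_lt.
by rewrite (bigD1 j) //= eqxx.
Qed.

Lemma bounded_label_le pi : bounded_restricted_growth pi -> forall i : 'I_m, pi i <= i.
Proof.
move=> brg; suff H n (i : 'I_m) : i < n -> pi i <= i by move=> i; exact: H (ltnSn i).
elim: n i => [|n IH] i //= lin; rewrite leqNgt; apply/negP => lt.
have [j ji pjE] := brg i (Ordinal (ltn_trans lt (ltn_ord _))) (leqnn _) lt.
by have := IH j (leq_trans ji lin); rewrite pjE /= leqNgt ji.
Qed.

Lemma bounded_restricted_growthE pi :
  bounded_restricted_growth pi <-> restricted_growth pi.
Proof.
split=> [brg i k k_lt|rg i k _]; last exact: rg.
exact: brg (leq_trans (ltnW k_lt) (bounded_label_le brg i)) k_lt.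
Qed.

Definition first_label_zero pi := forall i : 'I_m, nat_of_ord i = 0 -> nat_of_ord (pi i) = 0.
Definition growth_by_one pi := forall i : 'I_m, 0 < i ->
  pi i <= 1 + \max_(j < m | j < i) nat_of_ord (pi j).

Lemma restricted_growth_max pi :
  restricted_growth pi -> first_label_zero pi /\ growth_by_one pi.
Proof.
move=> rg; split=> i i_cond.
  apply/eqP; rewrite -leqn0 leqNgt; apply/negP => lt.
  by have [j] := rg i (Ordinal (ltn_trans lt (ltn_ord _))) lt; rewrite i_cond.
rewrite leqNgt; apply/negP => lt.
have [j ji pjE] := rg i (Ordinal (ltn_trans lt (ltn_ord _))) lt.
have := @leq_bigmax_cond _ (fun j : 'I_m => j < i) (fun j => nat_of_ord (pi j)) j ji.
by rewrite pjE /= add1n ltnn.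
Qed.

(* ... and conversely: a label k < pi i is at most the earlier maximum, attained
   at some j0 < i, so k = pi j0 or k occurs before j0 by induction. *)
Lemma max_restricted_growth pi :
  first_label_zero pi -> growth_by_one pi -> restricted_growth pi.
Proof.
move=> first growth; suff H n (i : 'I_m) : i < n -> forall k : 'I_p, k < pi i ->
    exists2 j : 'I_m, j < i & pi j = k by move=> i; exact: H (ltnSn i).
elim: n i => [|n IH] i //= lin k k_lt.
have [i0|i_pos] := posnP i; first by rewrite first in k_lt.
have earlier_nonempty : 0 < #|[pred j : 'I_m | j < i]|.
  by apply/card_gt0P; exists (Ordinal (ltn_trans i_pos (ltn_ord i))).
have [j0 j0i max_at_j0] :=
  @eq_bigmax_cond _ [pred j : 'I_m | j < i] (fun j => nat_of_ord (pi j)) earlier_nonempty.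
have k_le : k <= pi j0.
  have := growth i i_pos; rewrite [\max_(_ < _ | _) _]max_at_j0 add1n => pi_i_le.
  by rewrite -ltnS; exact: leq_trans k_lt pi_i_le.
case: (ltngtP k (pi j0)) k_le => [k_lt0|//|k_eq] _; last by exists j0 => //; apply: val_inj.
have [j jj0 <-] := IH j0 (leq_trans j0i lin) k k_lt0.
by exists j => //; exact: ltn_trans jj0 j0i.
Qed.

(* Two restricted growth labellings with the same kernel coincide: a row with a
   new label gets the least unused label in both. *)
Lemma restricted_growth_unique pi pi' : restricted_growth pi -> restricted_growth pi' ->
  (forall i j, (pi i == pi j) = (pi' i == pi' j)) -> pi =1 pi'.
Proof.
move=> rg rg' same_kernel.
suff H n (i : 'I_m) : i < n -> pi i = pi' i by move=> i; exact: H (ltnSn i).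
elim: n i => [|n IH] i //= lin.
have IHi (j : 'I_m) : j < i -> pi j = pi' j by move=> ji; exact: IH (leq_trans ji lin).
case: (boolP [exists j : 'I_m, (j < i) && (pi j == pi i)]).
  case/existsP => j /andP [ji same].
  by rewrite -(eqP same) -(eqP (etrans (esym (same_kernel j i)) same)) IHi.
rewrite negb_exists => /forallP new_label.
case: (ltngtP (pi i) (pi' i)) => [lt|gt|eq]; last exact: val_inj.
- have [j ji pjE] := rg' i (pi i) lt.
  by have := new_label j; rewrite ji IHi // pjE eqxx.
- have [j ji pjE] := rg i (pi' i) gt.
  by have := new_label j; rewrite ji same_kernel -IHi // pjE eqxx.
Qed.
End RestrictedGrowth.

Lemma inj_bounded_onto (T : finType) (S : {set T}) (F : T -> nat) :
  {in S &, injective F} -> (forall x, x \in S -> F x < #|S|) ->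
  forall k, k < #|S| -> exists2 x, x \in S & F x = k.
Proof.
move=> F_inj F_bound k k_lt.
have img_uniq : uniq (map F (enum S)).
  by rewrite map_inj_in_uniq ?enum_uniq // => x y; rewrite !mem_enum; exact: F_inj.
have img_sub : {subset map F (enum S) <= iota 0 #|S|}.
  by move=> y /mapP [x]; rewrite mem_enum mem_iota add0n => /F_bound ? ->.
have img_size : size (iota 0 #|S|) <= size (map F (enum S)).
  by rewrite size_iota size_map -cardE.
have [_ img_eq] := uniq_min_size img_uniq img_sub img_size.
have : k \in iota 0 #|S| by rewrite mem_iota add0n.
by rewrite -img_eq => /mapP [x]; rewrite mem_enum => xS ->; exists x.
Qed.

Section CanonicalLabelling.
Variable m : nat.
Implicit Types B C D : {set 'I_m}.

Definition precedes B C : bool := [exists x in B, [forall c in C, x < c]].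

Lemma precedes_irrefl B : ~~ precedes B B.
Proof. by apply/existsP => -[x /andP [xB /forall_inP /(_ x xB)]]; rewrite ltnn. Qed.

Lemma precedes_trans B C D : precedes B C -> precedes C D -> precedes B D.
Proof.
move=> /exists_inP [x xB /forall_inP x_lt] /exists_inP [y yC /forall_inP y_lt].
apply/exists_inP; exists x => //; apply/forall_inP => d dD.
exact: ltn_trans (x_lt y yC) (y_lt d dD).
Qed.

(* Compare the least elements: disjoint nonempty sets are always comparable. *)
Lemma precedes_disjoint B C : B != set0 -> C != set0 -> [disjoint B & C] ->
  precedes B C || precedes C B.
Proof.
move=> /set0Pn [b0 b0B] /set0Pn [c0 c0C] BC.
have [x xB x_min] := arg_minnP (fun x : 'I_m => nat_of_ord x) b0B.
have [y yC y_min] := arg_minnP (fun x : 'I_m => nat_of_ord x) c0C.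
case: (ltngtP x y) => [lt|gt|/val_inj xy].
- apply/orP; left; apply/exists_inP; exists x => //.
  by apply/forall_inP => c /y_min; exact: leq_trans lt.
- apply/orP; right; apply/exists_inP; exists y => //.
  by apply/forall_inP => c /x_min; exact: leq_trans gt.
- by move: (disjointFr BC xB); rewrite xy (yC : y \in C).
Qed.

Variable P : {set {set 'I_m}}.
Hypothesis partP : partition P [set: 'I_m].

Definition block_rank B : nat := #|[set C in P | precedes C B]|.

Lemma block_rank_bound B : B \in P -> block_rank B < #|P|.
Proof.
move=> BP; apply: proper_card; apply/properP; split.
  by apply/subsetP => C; rewrite inE => /andP [].
by exists B => //; rewrite inE (negbTE (precedes_irrefl B)) andbF.
Qed.

Lemma block_rank_lt B C : B \in P -> precedes B C -> block_rank B < block_rank C.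
Proof.
move=> BP BC; apply: proper_card; apply/properP; split.
  apply/subsetP => D; rewrite !inE => /andP [DP DB]; by rewrite DP (precedes_trans DB BC).
by exists B; rewrite !inE ?BP ?BC ?precedes_irrefl.
Qed.

Lemma precedes_blocks B C : B \in P -> C \in P -> B != C ->
  precedes B C || precedes C B.
Proof.
case/and3P: partP => _ /trivIsetP trivP set0P BP CP BC.
have nonempty D : D \in P -> D != set0 by move=> DP; apply: contraNneq set0P => <-.
exact: precedes_disjoint (nonempty B BP) (nonempty C CP) (trivP B C BP CP BC).
Qed.

Lemma block_rank_inj : {in P &, injective block_rank}.
Proof.
move=> B C BP CP rank_eq; apply/eqP; apply: contraTT isT => BC.
case/orP: (precedes_blocks BP CP BC) => [/(block_rank_lt BP)|/(block_rank_lt CP)];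
  by rewrite rank_eq ltnn.
Qed.

Lemma pblockT_mem i : pblock P i \in P.
Proof. by apply: pblock_mem; rewrite (cover_partition partP) inE. Qed.

Lemma mem_pblockT i : i \in pblock P i.
Proof. by rewrite mem_pblock (cover_partition partP) inE. Qed.

Definition block_label (i : 'I_m) : nat := block_rank (pblock P i).

Lemma block_label_bound i : block_label i < #|P|.
Proof. exact: block_rank_bound (pblockT_mem i). Qed.

Lemma block_label_eq i j : (block_label i == block_label j) = (j \in pblock P i).
Proof.
have trivP : trivIset P by case/and3P: partP.
rewrite /block_label -eq_pblock ?(cover_partition partP) ?inE //.
by apply/eqP/eqP => [/(block_rank_inj (pblockT_mem i) (pblockT_mem j))|->].
Qed.

(* Block labels grow in a restricted way: the blocks of smaller rank are the
   blocks preceding the block of i, and each has an element below i. *)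
Lemma block_label_restricted (i : 'I_m) k : k < block_label i ->
  exists2 j : 'I_m, j < i & block_label j = k.
Proof.
move=> k_lt; have trivP : trivIset P by case/and3P: partP.
pose before := [set C in P | precedes C (pblock P i)].
have [C] : exists2 C, C \in before & block_rank C = k.
  apply: inj_bounded_onto k_lt => [C D|C].
    by rewrite !inE => /andP [CP _] /andP [DP _]; exact: block_rank_inj.
  by rewrite inE => /andP [CP]; exact: block_rank_lt.
rewrite inE => /andP [CP /exists_inP [x xC /forall_inP x_lt]] <-.
by exists x; [exact: x_lt (mem_pblockT i) | rewrite /block_label (def_pblock trivP CP xC)].
Qed.

Lemma block_label_onto k : k < #|P| -> exists i, block_label i = k.
Proof.
case/and3P: partP => _ trivP set0P k_lt.
have [B BP <-] := inj_bounded_onto block_rank_inj block_rank_bound k_lt.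
have /set0Pn [i iB] : B != set0 by apply: contraNneq set0P => <-.
by exists i; rewrite /block_label (def_pblock trivP BP iB).
Qed.

End CanonicalLabelling.

Lemma levels_kernel m p (P : {set {set 'I_m}}) (pi : 'I_m -> 'I_p) :
  partition P [set: 'I_m] -> nonempty_levels (indicator_matrix pi) = P ->
  forall i j, (pi i == pi j) = (j \in pblock P i).
Proof.
case/and3P => _ trivP _ levelsP i j.
have levelP : [set k | pi k == pi i] \in P.
  rewrite -levelsP -level_indicator; apply/imsetP; exists (pi i) => //.
  by rewrite inE level_indicator; apply/set0Pn; exists i; rewrite inE.
by rewrite (def_pblock trivP levelP) ?inE // eq_sym.
Qed.

Section CanonicalAssignment.
Variables (m p : nat) (P : {set {set 'I_m}}).
Hypotheses (partP : partition P [set: 'I_m]) (P_small : #|P| <= p).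

Definition canonical_label (i : 'I_m) : 'I_p :=
  Ordinal (leq_trans (block_label_bound partP i) P_small).

Lemma canonical_label_rg : restricted_growth canonical_label.
Proof.
move=> i k k_lt; have [j ji jE] := block_label_restricted partP k_lt.
by exists j => //; apply: val_inj.
Qed.

Lemma canonical_levels : nonempty_levels (indicator_matrix canonical_label) = P.
Proof.
case/and3P: (partP) => _ trivP set0P.
have level_label i : level (indicator_matrix canonical_label) (canonical_label i) = pblock P i.
  apply/setP => j; rewrite level_indicator inE -val_eqE eq_sym.
  exact: block_label_eq.
apply/setP => B; apply/imsetP/idP => [[k]|BP].
  rewrite inE => /set0Pn [i]; rewrite {1}level_indicator inE => /eqP <- ->.
  by rewrite level_label pblockT_mem.
have /set0Pn [i iB] : B != set0 by apply: contraNneq set0P => <-.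
exists (canonical_label i); last by rewrite level_label (def_pblock trivP BP iB).
by rewrite inE level_label; apply/set0Pn; exists i; exact: mem_pblockT.
Qed.

Lemma canonical_levels_range (k : 'I_p) :
  level (indicator_matrix canonical_label) k != set0 <-> k < #|P|.
Proof.
rewrite level_indicator; split => [/set0Pn [i]|/(block_label_onto partP) [i ik]].
  by rewrite inE => /eqP <-; exact: block_label_bound.
by apply/set0Pn; exists i; rewrite inE -val_eqE /= ik.
Qed.

Lemma canonical_unique (g : 'M[nat]_(m, p)) :
  assignment g -> ordered_ineq g -> nonempty_levels g = P ->
  g = indicator_matrix canonical_label.
Proof.
move=> gA; have [pi g_pi] := assignment_label gA; rewrite (assignmentE gA g_pi).
move=> /ordered_ineq_indicator /bounded_restricted_growthE pi_rg pi_levels.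
have same_kernel i j : (pi i == pi j) = (canonical_label i == canonical_label j).
  by rewrite (levels_kernel partP pi_levels) (levels_kernel partP canonical_levels).
apply/matrixP => i k; rewrite !mxE.
by rewrite (restricted_growth_unique pi_rg canonical_label_rg same_kernel).
Qed.
End CanonicalAssignment.

Theorem mainTheorem4 (m p : nat) (hm : 0 < m) (hp : 0 < p) :
  (forall (g : 'M[nat]_(m, p)), assignment g ->
   forall pi : 'I_m -> 'I_p, (forall i, g i (pi i) = 1) ->
   (ordered_ineq g <->
      ((forall i : 'I_m, nat_of_ord i = 0 -> nat_of_ord (pi i) = 0) /\
       (forall i : 'I_m, 0 < i ->
          pi i <= 1 + \max_(j < m | j < i) nat_of_ord (pi j)))))
  /\
  (forall P : {set {set 'I_m}}, partition P [set: 'I_m] -> #|P| <= p ->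
     (exists! g : 'M[nat]_(m, p),
        assignment g /\ ordered_ineq g /\ nonempty_levels g = P)
     /\
     (forall g : 'M[nat]_(m, p),
        assignment g -> ordered_ineq g -> nonempty_levels g = P ->
        forall k : 'I_p, level g k != set0 <-> k < #|P|)).
Proof.
split=> [g gA pi g_pi|P partP P_small].
  rewrite (assignmentE gA g_pi); apply: iff_trans (ordered_ineq_indicator pi) _.
  apply: iff_trans (bounded_restricted_growthE pi) _.
  by split=> [/restricted_growth_max|[]]; last exact: max_restricted_growth.
split=> [|g gA g_ineq g_levels].
  exists (indicator_matrix (canonical_label partP P_small)).
  split=> [|g [gA [g_ineq g_levels]]].
    split; first exact: indicator_assignment.
    split; last exact: canonical_levels.
    by apply/ordered_ineq_indicator/bounded_restricted_growthE; exact: canonical_label_rg.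
  by rewrite (canonical_unique partP P_small gA g_ineq g_levels).
by rewrite (canonical_unique partP P_small gA g_ineq g_levels); exact: canonical_levels_range.
Qed.
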